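(* Let $n$ be a positive integer with $n\equiv0\pmod 4$, and $\epsilon,\Delta\in\mathbb R$. Consider $n$ parties on a ring (indices mod $n$); each even site $2i$ holds a vector $A^{(2i)}\in\{\pm1\}^4$ and each odd site $2i+1$ holds $B^{(2i+1)}\in\{\pm1\}^3$. Define $$J:=\sum_{i=0}^{n/2-1}\Big[(1+\epsilon)\,A^{(2i)T}S_\Delta B^{(2i+1)}+(1-\epsilon)\,B^{(2i+1)T}S_\Delta^{T}A^{(2i+2)}\Big].$$ Then the minimum of $J$ over all such assignments equals $-n\max\{1,|\epsilon|\}\,c(\Delta)$, where $c(\Delta)=4+2|\Delta|$ if $|\Delta|\le2$ and $c(\Delta)=4|\Delta|$ if $|\Delta|>2$.
   Context: $S_\Delta$ is the real $4\times3$ matrix with rows $(1,1,\Delta)$, $(1,-1,-\Delta)$, $(-1,1,-\Delta)$, $(-1,-1,\Delta)$. *)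

(* the statement is purely algebraic/order-theoretic over the
   reals, so we state it for an arbitrary real field R (covers R = reals). *)
From HB Require Import structures.
From mathcomp Require Import all_boot all_order all_algebra.
Set Implicit Arguments. Unset Strict Implicit. Unset Printing Implicit Defensive.
Import Order.TTheory GRing.Theory Num.Theory.
Local Open Scope ring_scope.

Definition S_Delta (R : nzRingType) (D : R) : 'M[R]_(4, 3) :=
  \matrix_(i < 4, j < 3)
    nth 0 (nth [::] [:: [:: 1; 1; D]; [:: 1; -1; -D];
                        [:: -1; 1; -D]; [:: -1; -1; D]] i) j.

Definition pm1_vec (R : nzRingType) (k : nat) (v : 'cV[R]_k) : Prop :=
  forall j, v j 0 = 1 \/ v j 0 = -1.

Definition J_ring (R : nzRingType) (n : nat) (eps D : R)
    (A : nat -> 'cV[R]_4) (B : nat -> 'cV[R]_3) : R :=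
  \sum_(i < n %/ 2)
    ( (1 + eps) * ((A (((2 * i) %% n)%N))^T *m S_Delta D *m B (((2 * i + 1) %% n)%N)) 0 0
    + (1 - eps) * ((B (((2 * i + 1) %% n)%N))^T *m (S_Delta D)^T
                     *m A (((2 * i + 2) %% n)%N)) 0 0 ).

Definition c_Delta (R : realDomainType) (D : R) : R :=
  if `|D| <= 2 then 4 + 2 * `|D| else 4 * `|D|.

From HB Require Import structures.
From mathcomp Require Import all_boot all_order all_algebra.
From mathcomp Require Import ring lra zify.
Set Implicit Arguments. Unset Strict Implicit. Unset Printing Implicit Defensive.
Import Order.TTheory GRing.Theory Num.Theory.
Local Open Scope ring_scope.

(** Every bond contributes a bilinear term [a^T S_Delta b] with [a], [b] sign
    vectors, and [|a^T S_Delta b| <= sum_j |(S_Delta b)_j| = c(Delta)]: the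
    l1-norm of [S_Delta b] does not depend on the sign vector [b], because
    exactly one of [b_0 + b_1], [b_0 - b_1] vanishes.  The two bonds of an odd
    site are weighted by [1 + eps] and [1 - eps], and
    [|1 + eps| + |1 - eps| = 2 max(1, |eps|)], which gives the lower bound.
    Choosing [a = -sign(S_Delta b)] attains [-c(Delta)] on every bond, and
    flipping the signs of the sites with period 4 aligns every bond with the
    sign of its weight; this is where [4 | n] is needed. *)

Section SignVectors.
Variable R : realDomainType.

Definition pm1 (x : R) : Prop := x = 1 \/ x = -1.

Definition sgn1 (x : R) : R := if 0 <= x then 1 else -1.

Lemma sgn1_pm1 (x : R) : pm1 (sgn1 x).
Proof. by rewrite /sgn1; case: ifP; [left | right]. Qed.

Lemma sgn1_mul_norm (x : R) : sgn1 x * x = `|x|.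
Proof.
rewrite /sgn1; have [hx|hx] := lerP 0 x.
  by rewrite mul1r ger0_norm.
by rewrite mulN1r ltr0_norm.
Qed.

Lemma sgn1_sqr (x : R) : sgn1 x * sgn1 x = 1.
Proof. by case: (sgn1_pm1 x) => ->; rewrite ?mulN1r ?opprK ?mulr1. Qed.

Lemma pm1M (s t : R) : pm1 s -> pm1 t -> pm1 (s * t).
Proof.
rewrite /pm1 => -[] -> [] ->; rewrite ?mul1r ?mulN1r ?opprK;
  by [left | right].
Qed.

Lemma pm1_vec_scale (k : nat) (s : R) (v : 'cV[R]_k) :
  pm1 s -> pm1_vec v -> pm1_vec (s *: v).
Proof. by move=> hs hv j; rewrite mxE; apply: pm1M. Qed.

Definition neg_sign_vec (k : nat) (v : 'cV[R]_k) : 'cV[R]_k :=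
  \col_i - sgn1 (v i 0).

Lemma pm1_neg_sign_vec (k : nat) (v : 'cV[R]_k) : pm1_vec (neg_sign_vec v).
Proof.
move=> j; rewrite mxE /pm1.
by case: (sgn1_pm1 (v j 0)) => ->; rewrite ?opprK; [right|left].
Qed.

Lemma ge_neg_norm_mul (k x c : R) : `|x| <= c -> - (`|k| * c) <= k * x.
Proof.
move=> hx; have hkx : `|k * x| <= `|k| * c by rewrite normrM ler_wpM2l.
by rewrite lerNl (le_trans (ler_norm _)) // normrN.
Qed.

Lemma norm_addr_subr (p w : R) : `|p + w| + `|p - w| = 2 * Num.max `|p| `|w|.
Proof.
rewrite maxEle; case: leP.
all: have [hp|hp] := lerP 0 p; have [hw|hw] := lerP 0 w;
  have [h1|h1] := lerP 0 (p + w); have [h2|h2] := lerP 0 (p - w);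
  rewrite ?(ger0_norm hp) ?(ltr0_norm hp) ?(ger0_norm hw) ?(ltr0_norm hw)
    ?(ger0_norm h1) ?(ltr0_norm h1) ?(ger0_norm h2) ?(ltr0_norm h2) => ?; lra.
Qed.

End SignVectors.

Section BilinearForms.
Variables (R : realDomainType) (m n : nat) (M : 'M[R]_(m, n)).
Implicit Types (a : 'cV[R]_m) (b : 'cV[R]_n).

Lemma bilinear_sum a b : (a^T *m M *m b) 0 0 = \sum_i a i 0 * (M *m b) i 0.
Proof. by rewrite -mulmxA mxE; apply: eq_bigr => i _; rewrite mxE. Qed.

Lemma bilinear_trmx a b : (b^T *m M^T *m a) 0 0 = (a^T *m M *m b) 0 0.
Proof.
have -> : b^T *m M^T *m a = (a^T *m M *m b)^T by rewrite !trmx_mul trmxK mulmxA.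
by rewrite mxE.
Qed.

Lemma bilinear_scale a b (x y : R) :
  ((x *: a)^T *m M *m (y *: b)) 0 0 = x * y * (a^T *m M *m b) 0 0.
Proof.
rewrite !bilinear_sum -scalemxAr mulr_sumr.
by apply: eq_bigr => i _; rewrite !mxE; ring.
Qed.

Lemma pm1_bilinear_le a b :
  pm1_vec a -> `|(a^T *m M *m b) 0 0| <= \sum_i `|(M *m b) i 0|.
Proof.
move=> ha; rewrite bilinear_sum (le_trans (ler_norm_sum _ _ _)) //.
apply: ler_sum => i _; rewrite normrM.
by case: (ha i) => ->; rewrite ?normrN normr1 mul1r.
Qed.

Lemma bilinear_neg_sign_vec b :
  ((neg_sign_vec (M *m b))^T *m M *m b) 0 0 = - \sum_i `|(M *m b) i 0|.
Proof.
rewrite bilinear_sum -sumrN; apply: eq_bigr => i _.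
by rewrite mxE mulNr sgn1_mul_norm.
Qed.

End BilinearForms.

Lemma sum_ord3 (V : nmodType) (F : 'I_3 -> V) :
  \sum_(k < 3) F k = F 0 + F 1 + F 2%:R.
Proof.
rewrite !big_ord_recr big_ord0 Monoid.mul1m.
by congr (_ + _ + _); congr F; apply: val_inj.
Qed.

Lemma sum_ord4 (V : nmodType) (F : 'I_4 -> V) :
  \sum_(k < 4) F k = F 0 + F 1 + F 2%:R + F 3%:R.
Proof.
rewrite !big_ord_recr big_ord0 Monoid.mul1m.
by congr (_ + _ + _ + _); congr F; apply: val_inj.
Qed.

Section SDelta.
Variables (R : realDomainType) (D : R).

Lemma c_DeltaE : c_Delta D = 2 * Num.max 2 `|D| + 2 * `|D|.
Proof.
rewrite /c_Delta maxEle; case: (leP 2 `|D|) => h1; case: (lerP `|D| 2) => h2; lra.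
Qed.

Lemma S_Delta_l1 (b : 'cV[R]_3) :
  let p := b 0 0 + b 1 0 in let q := b 0 0 - b 1 0 in let w := D * b 2%:R 0 in
  \sum_j `|(S_Delta D *m b) j 0| = (`|p + w| + `|p - w|) + (`|q + w| + `|q - w|).
Proof.
rewrite /= sum_ord4 !mxE !sum_ord3 !mxE /= !mul1r !mulN1r !mulNr.
rewrite -[`|- b 0 0 + _ - _|]normrN -[`|- b 0 0 - _ + _|]normrN.
by rewrite !opprB !opprD !opprK [D * _ + _]addrC; ring.
Qed.

Lemma S_Delta_l1_pm1 (b : 'cV[R]_3) :
  pm1_vec b -> \sum_j `|(S_Delta D *m b) j 0| = c_Delta D.
Proof.
move=> hb; rewrite S_Delta_l1 !norm_addr_subr c_DeltaE.
have -> : `|D * b 2%:R 0| = `|D|.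
  by rewrite normrM; case: (hb 2%:R) => ->; rewrite ?normrN normr1 mulr1.
have two : `|1 + 1 : R| = 2 by rewrite ger0_norm ?addr_ge0 ?ler01.
have [[-> ->]|[-> ->]] : (`|b 0 0 + b 1 0| = 2 /\ `|b 0 0 - b 1 0| = 0)
                     \/ (`|b 0 0 + b 1 0| = 0 /\ `|b 0 0 - b 1 0| = 2).
  case: (hb 0) => ->; case: (hb 1) => ->;
    rewrite ?opprK ?subrr ?addNr -?opprD ?normrN ?normr0 two; by [left | right].
all: rewrite !maxEle normr_ge0 /=; case: leP => h; lra.
Qed.

Lemma S_Delta_bilinear_le (a : 'cV[R]_4) (b : 'cV[R]_3) :
  pm1_vec a -> pm1_vec b -> `|(a^T *m S_Delta D *m b) 0 0| <= c_Delta D.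
Proof. by move=> ha hb; rewrite -(S_Delta_l1_pm1 hb) pm1_bilinear_le. Qed.

End SDelta.

Lemma sum_half_const (R : nzSemiRingType) (n : nat) (x : R) :
  (2 %| n)%N -> \sum_(i < n %/ 2) (2 * x) = n%:R * x.
Proof.
by move=> n2; rewrite sumr_const card_ord -(mulr_natl (2 * x)) mulrA -natrM divnK.
Qed.

Section Ring.
Variables (R : realDomainType) (eps D : R).

Lemma bond_pair_ge (a a' : 'cV[R]_4) (b : 'cV[R]_3) :
  pm1_vec a -> pm1_vec a' -> pm1_vec b ->
  2 * - (Num.max 1 `|eps| * c_Delta D) <=
    (1 + eps) * (a^T *m S_Delta D *m b) 0 0
    + (1 - eps) * (a'^T *m S_Delta D *m b) 0 0.
Proof.
move=> ha ha' hb.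
have := ge_neg_norm_mul (1 + eps) (S_Delta_bilinear_le D ha hb).
have := ge_neg_norm_mul (1 - eps) (S_Delta_bilinear_le D ha' hb).
have : 2 * Num.max 1 `|eps| * c_Delta D
       = `|1 + eps| * c_Delta D + `|1 - eps| * c_Delta D.
  by rewrite -mulrDl norm_addr_subr normr1.
lra.
Qed.

Lemma J_ring_ge (n : nat) (A : nat -> 'cV[R]_4) (B : nat -> 'cV[R]_3) :
  (2 %| n)%N ->
  (forall k, ~~ odd k -> pm1_vec (A k)) -> (forall k, odd k -> pm1_vec (B k)) ->
  - (n%:R) * Num.max 1 `|eps| * c_Delta D <= J_ring n eps D A B.
Proof.
move=> n2 hA hB; have n_even : odd n = false by apply/negbTE; rewrite -dvdn2.
have -> : - (n%:R) * Num.max 1 `|eps| * c_Delta D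
          = \sum_(i < n %/ 2) (2 * - (Num.max 1 `|eps| * c_Delta D)).
  by rewrite sum_half_const //; ring.
apply: ler_sum => i _; rewrite bilinear_trmx.
by apply: bond_pair_ge; [apply: hA | apply: hA | apply: hB];
  rewrite odd_mod // ?oddD; case: (odd i).
Qed.

Lemma J_ring_attained (n : nat) : (4 %| n)%N ->
  exists (A : nat -> 'cV[R]_4) (B : nat -> 'cV[R]_3),
    (forall k, ~~ odd k -> pm1_vec (A k)) /\ (forall k, odd k -> pm1_vec (B k)) /\
    J_ring n eps D A B = - (n%:R) * Num.max 1 `|eps| * c_Delta D.
Proof.
move=> n4; set s1 := sgn1 (1 + eps); set s2 := sgn1 (1 - eps).
pose b : 'cV[R]_3 := const_mx 1.
pose a := neg_sign_vec (S_Delta D *m b).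
have hb : pm1_vec b by move=> j; rewrite mxE; left.
have hab : (a^T *m S_Delta D *m b) 0 0 = - c_Delta D.
  by rewrite bilinear_neg_sign_vec S_Delta_l1_pm1.
have hM : 2 * Num.max 1 `|eps| = s1 * (1 + eps) + s2 * (1 - eps).
  by rewrite !sgn1_mul_norm norm_addr_subr normr1.
(* Writing [A k = sigma_k *: a] and [B k = tau_k *: b], this choice gives
   [sigma_(2i) tau_(2i+1) = s1] and [sigma_(2i+2) tau_(2i+1) = s2]. *)
pose A k := (if (k %% 4 < 2)%N then 1 else s1 * s2) *: a.
pose B k := (if (k %% 4 < 2)%N then s1 else s2) *: b.
exists A, B; split; [|split].
- move=> k _; apply: pm1_vec_scale (pm1_neg_sign_vec _).
  by case: ifP => _; [left | apply: pm1M; apply: sgn1_pm1].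
- by move=> k _; apply: pm1_vec_scale hb; case: ifP => _; apply: sgn1_pm1.
have -> : - (n%:R) * Num.max 1 `|eps| * c_Delta D
          = \sum_(i < n %/ 2) (2 * - (Num.max 1 `|eps| * c_Delta D)).
  by rewrite sum_half_const ?(dvdn_trans _ n4) //; ring.
apply: eq_bigr => i _.
rewrite bilinear_trmx /A /B !modn_dvdm // !bilinear_scale hab.
transitivity (- ((s1 * (1 + eps) + s2 * (1 - eps)) * c_Delta D)); last first.
  by rewrite -hM; ring.
have [i_mod|i_mod] := boolP ((2 * i) %% 4 < 2)%N.
  have -> : ((2 * i + 1) %% 4 < 2)%N by lia.
  have -> : ((2 * i + 2) %% 4 < 2)%N = false by lia.
  by rewrite [s1 * s2 * s1]mulrAC sgn1_sqr; ring.
have -> : ((2 * i + 1) %% 4 < 2)%N = false by lia.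
have -> : ((2 * i + 2) %% 4 < 2)%N by lia.
by rewrite -[s1 * s2 * s2]mulrA sgn1_sqr; ring.
Qed.

End Ring.

Theorem mainTheorem11 (R : realFieldType) (n : nat) (eps D : R)
    (hn : (0 < n)%N) (h4 : (n %% 4 = 0)%N) :
  (forall (A : nat -> 'cV[R]_4) (B : nat -> 'cV[R]_3),
      (forall k, ~~ odd k -> pm1_vec (A k)) ->
      (forall k, odd k -> pm1_vec (B k)) ->
      - (n%:R) * Num.max 1 `|eps| * c_Delta D <= J_ring n eps D A B)
  /\
  (exists (A : nat -> 'cV[R]_4) (B : nat -> 'cV[R]_3),
      (forall k, ~~ odd k -> pm1_vec (A k)) /\
      (forall k, odd k -> pm1_vec (B k)) /\
      J_ring n eps D A B = - (n%:R) * Num.max 1 `|eps| * c_Delta D).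
Proof.
have n4 : (4 %| n)%N by rewrite /dvdn h4.
split; last exact: J_ring_attained.
by move=> A B; apply: J_ring_ge; apply: dvdn_trans n4.
Qed.
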